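(* Let $F:\mathbb{R}^n\to\mathbb{R}$ be smooth, $L=\{(q,\nabla F(q)):q\in\mathbb{R}^n\}\subset\mathbb{R}^{2n}$, and $\Psi:\mathbb{R}^n\times\mathbb{R}^n\to\mathbb{R}^{2n}$, $\Psi(q,w)=(q+w,\nabla F(q)+\nabla^2F(q)w)$. Then the set $\Delta$ of critical points of $\Psi$ is $$\Delta=\{(q,w)\in\mathbb{R}^n\times\mathbb{R}^n:\ \text{the linear map }\mathbb{R}^n\ni\zeta\mapsto\nabla^3F(q)[\zeta,w]\in\mathbb{R}^n\ \text{is singular}\}.$$ Consequently, a point $\Psi(q,w)$ belongs to the wall $\Sigma=\Psi(\Delta)$ if and only if the linear map $\zeta\mapsto\nabla^3F(q)[\zeta,w]$ does not have full rank.
   Context: $\nabla^2F(q)$ is the Hessian matrix, and $\nabla^3F(q)[v,\zeta]=\big(\sum_{i,j}F_{1ij}(q)v_i\zeta_j,\dots,\sum_{i,j}F_{nij}(q)v_i\zeta_j\big)$ with $F_{kij}=\partial^3F/\partial q_k\partial q_i\partial q_j$. $L$ is a Lagrangian submanifold of $\mathbb{R}^{2n}$ (standard symplectic form $\sum dp_i\wedge dq_i$), $\mathbb{R}^n\times\mathbb{R}^n$ is identified with $TL$ via $(q,w)\mapsto$ the tangent vector $(w,\nabla^2F(q)w)$ at $(q,\nabla F(q))$, and $\Psi$ corresponds to $(X,W)\mapsto X+W$. *)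

From HB Require Import structures.
From mathcomp Require Import all_boot all_order all_algebra.
From mathcomp Require Import all_classical all_reals all_analysis.
Set Implicit Arguments. Unset Strict Implicit. Unset Printing Implicit Defensive.
Import Order.TTheory GRing.Theory Num.Theory.
Import numFieldNormedType.Exports.
Local Open Scope ring_scope.

Section Defs.
Variables (R : realType) (n : nat).

Definition ebasis (i : 'I_n) : 'rV[R]_n := delta_mx 0 i.

Definition partial (i : 'I_n) (f : 'rV[R]_n -> R) : 'rV[R]_n -> R :=
  fun x => 'D_(ebasis i) f x.

Definition iter_partial (s : seq 'I_n) (f : 'rV[R]_n -> R) : 'rV[R]_n -> R :=
  foldr partial f s.

Definition smooth (F : 'rV[R]_n -> R) : Prop :=
  forall (s : seq 'I_n) (x : 'rV[R]_n), differentiable (iter_partial s F) x.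

Definition grad (F : 'rV[R]_n -> R) (q : 'rV[R]_n) : 'rV[R]_n :=
  \row_i partial i F q.

Definition hess (F : 'rV[R]_n -> R) (q : 'rV[R]_n) : 'M[R]_n :=
  \matrix_(i, j) partial i (partial j F) q.

Definition d3 (F : 'rV[R]_n -> R) (q : 'rV[R]_n) (k i j : 'I_n) : R :=
  partial k (partial i (partial j F)) q.

Definition nabla3 (F : 'rV[R]_n -> R) (q v zeta : 'rV[R]_n) : 'rV[R]_n :=
  \row_k \sum_i \sum_j d3 F q k i j * v 0 i * zeta 0 j.

Definition Psi (F : 'rV[R]_n -> R) (x : 'rV[R]_n * 'rV[R]_n)
  : 'rV[R]_n * 'rV[R]_n :=
  (x.1 + x.2, grad F x.1 + \row_i \sum_j hess F x.1 i j * x.2 0 j).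

End Defs.

Definition critical_point (R : realType) (U V : normedModType R)
  (f : U -> V) (x : U) : Prop :=
  ~ (forall y : V, exists v : U, 'd f x v = y).

From HB Require Import structures.
From mathcomp Require Import all_boot all_order all_algebra.
From mathcomp Require Import all_classical all_reals all_analysis.
Import Order.TTheory GRing.Theory Num.Theory.
Import numFieldNormedType.Exports.
Local Open Scope classical_set_scope.
Local Open Scope ring_scope.

Set Implicit Arguments.
Unset Strict Implicit.
Unset Printing Implicit Defensive.

(* Writing tangent vectors as (X, W), the differential of Psi at (q, w) is
     (X, W) |-> (X + W, hess F q (X + W) + nabla3 F q X w):
   differentiating q |-> hess F q w in the direction X gives nabla3 F q X w
   once the third partial derivatives are known to be symmetric (Schwarz's
   theorem, which follows from the mean value theorem by comparing second
   differences).  As (X, W) |-> (X + W, X) is invertible, this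
   differential is onto iff X |-> nabla3 F q X w is onto, i.e. (the map
   being an endomorphism of R^n) iff it is bijective. *)

Lemma MVT_pos (R : realType) (f df : R -> R) (h : R) :
  0 < h -> (forall t : R, is_derive t 1 f (df t)) ->
  exists2 s, 0 < s < h & f h - f 0 = h * df s.
Proof.
move=> h0 fdf; have [|s] := MVT h0 (fun (t : R) _ => fdf t).
  by apply: derivable_within_continuous => t _; have [] := fdf t.
by rewrite in_itv /= subr0 mulrC; exists s.
Qed.

Section SecondDifference.
Context {R : realType} {V : normedModType R}.

Lemma is_derive_line (g : V -> R) (u y : V) (t : R) :
  derivable g (t *: u + y) u ->
  is_derive t 1 (fun s => g (s *: u + y)) ('D_u g (t *: u + y)).
Proof.
move=> dg.
have E : (fun h : R => h^-1 *: (g ((h *: 1 + t) *: u + y) - g (t *: u + y)))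
    = (fun h => h^-1 *: (g (h *: u + (t *: u + y)) - g (t *: u + y))).
  by apply/funext => h; rewrite [h *: 1]mulr1 scalerDl addrA.
by apply: DeriveDef; rewrite /derivable /derive /= E.
Qed.

Variables (g : V -> R) (u v : V).
Hypotheses (gu : forall z, derivable g z u)
  (guv : forall z, derivable ('D_u g) z v).

Lemma second_difference_MVT (q : V) (h : R) : 0 < h ->
  exists s t, [/\ 0 < s < h, 0 < t < h &
    g (h *: u + (h *: v + q)) - g (h *: u + q) - (g (h *: v + q) - g q)
    = h * h * 'D_v ('D_u g) (t *: v + (s *: u + q))].
Proof.
move=> h0.
have [s sh Es] := MVT_pos
  (f := fun r => g (r *: u + (h *: v + q)) - g (r *: u + q)) h0
  (fun r => is_deriveB (is_derive_line (@gu _))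
                      (is_derive_line (@gu _))).
have [t th Et] := MVT_pos
  (f := fun r => 'D_u g (r *: v + (s *: u + q))) h0
  (fun r => is_derive_line (@guv _)).
exists s, t; split => //.
move: Es Et; rewrite !scale0r !add0r => -> Et.
by rewrite [s *: u + (_ + q)]addrCA Et mulrA.
Qed.

End SecondDifference.

Section Schwarz.
Context {R : realType} {V : normedModType R}.
Variables (g : V -> R) (u v : V).
Hypotheses (gu : forall z, derivable g z u) (gv : forall z, derivable g z v)
  (guv : forall z, derivable ('D_u g) z v)
  (gvu : forall z, derivable ('D_v g) z u).

(* Both mixed derivatives compute the second difference
   g (q + h u + h v) - g (q + h u) - g (q + h v) + g q, divided by h ^ 2,
   at points within h (|u| + |v|) of q. *)
Lemma mixed_derives_meet (q : V) (d : R) : 0 < d ->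
  exists2 a, ball q d a &
  exists2 b, ball q d b & 'D_v ('D_u g) a = 'D_u ('D_v g) b.
Proof.
move=> d0; pose h := d / (`|u| + `|v| + 1).
have uv1 : 0 < `|u| + `|v| + 1 by rewrite ltr_wpDl // addr_ge0.
have h0 : 0 < h by rewrite divr_gt0.
have hd : h * (`|u| + `|v|) < d.
  by rewrite /h mulrAC ltr_pdivrMr // ltr_pM2l // ltrDl.
have inball r s (a b : V) : 0 < r < h -> 0 < s < h ->
    `|a| + `|b| = `|u| + `|v| -> ball q d (r *: a + (s *: b + q)).
  move=> /andP[r0 rh] /andP[s0 sh] ab.
  rewrite -ball_normE /ball_ /= addrA opprD addrCA subrr addr0 normrN.
  rewrite (le_lt_trans (ler_normD _ _)) // (le_lt_trans _ hd) // -ab mulrDr.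
  by rewrite !normrZ !gtr0_norm // lerD // ler_wpM2r // ltW.
have [s1 [t1 [s1h t1h E1]]] := second_difference_MVT gu guv q h0.
have [s2 [t2 [s2h t2h E2]]] := second_difference_MVT gv gvu q h0.
exists (t1 *: v + (s1 *: u + q)); first by apply: inball; rewrite // addrC.
exists (t2 *: u + (s2 *: v + q)); first exact: inball.
have hh0 : h * h != 0 by rewrite mulf_neq0 // gt_eqF.
apply: (mulfI hh0); apply: etrans (esym E1) (etrans _ E2).
rewrite [h *: v + (h *: u + q)]addrCA.
by rewrite !opprB addrACA [RHS]addrACA [- g (h *: v + q) + _]addrC.
Qed.

Lemma mixed_deriveC (q : V) :
  {for q, continuous ('D_v ('D_u g))} -> {for q, continuous ('D_u ('D_v g))} ->
  'D_v ('D_u g) q = 'D_u ('D_v g) q.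
Proof.
move=> cuv cvu; apply/eqP; rewrite -subr_eq0 -normr_le0.
apply/ler_addgt0Pr => e e0; rewrite add0r.
have e20 : 0 < e / 2 by rewrite divr_gt0.
have /nbhs_ballP[d d0 near_q] : \forall z \near q,
    `|'D_v ('D_u g) q - 'D_v ('D_u g) z| < e / 2 /\
    `|'D_u ('D_v g) q - 'D_u ('D_v g) z| < e / 2.
  exact: filterI ((cvgrPdist_lt _ _).1 cuv _ e20)
                ((cvgrPdist_lt _ _).1 cvu _ e20).
have [a /near_q[qa _] [b /near_q[_ qb] ab]] := mixed_derives_meet q d0.
have close (x y z z' : R) :
    z = z' -> `|x - z| < e / 2 -> `|y - z'| < e / 2 -> `|x - y| <= e.
  move=> <- xz yz; rewrite (splitr e).
  by apply: le_trans (ler_distD z x y) _; rewrite (distrC z); apply/ltW/ltrD.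
exact: close ab qa qb.
Qed.

End Schwarz.

Section Calculus.
Context {R : realType}.

Section LinearFun.
Variables (U W : normedModType R) (f : U -> W).
Hypotheses (lin_f : linear f) (cont_f : continuous f).

Let fL : {linear U -> W} := HB.pack f (GRing.isLinear.Build _ _ _ _ f lin_f).

Lemma differentiable_linear (x : U) : differentiable f x.
Proof. exact: (@linear_differentiable _ _ _ fL). Qed.

Lemma diff_linear (x : U) : 'd f x = f :> (U -> W).
Proof. exact: (@diff_lin _ _ _ fL). Qed.

End LinearFun.

Lemma differentiable_comp_fst (U U' W : normedModType R) (f : U -> W)
    (x : U * U') :
  differentiable f x.1 -> differentiable (fun y => f y.1) x.
Proof.
apply: (@differentiable_comp _ _ _ _ fst).
by apply: differentiable_linear => // y; exact: cvg_fst.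
Qed.

Lemma differentiable_comp_snd (U U' W : normedModType R) (f : U' -> W)
    (x : U * U') :
  differentiable f x.2 -> differentiable (fun y => f y.2) x.
Proof.
apply: (@differentiable_comp _ _ _ _ snd).
by apply: differentiable_linear => // y; exact: cvg_snd.
Qed.

Lemma derive_comp_fst (U U' W : normedModType R) (f : U -> W) (x v : U * U') :
  'D_v (fun y => f y.1) x = 'D_(v.1) f x.1.
Proof. by []. Qed.

Lemma derive_comp_snd (U U' W : normedModType R) (f : U' -> W) (x v : U * U') :
  'D_v (fun y => f y.2) x = 'D_(v.2) f x.2.
Proof. by []. Qed.

Lemma derive_coord (m p : nat) (M N : 'M[R]_(m, p)) i j :
  'D_N (fun A : 'M[R]_(m, p) => A i j) M = N i j.
Proof.
by rewrite -[in RHS](derive_id M N) derive_mx ?mxE //; apply: derivable_id.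
Qed.

Section RowValued.
Variables (U : normedModType R) (n : nat) (f : 'I_n -> U -> R) (x : U).

Lemma differentiable_row :
  (forall i, differentiable (f i) x) -> differentiable (fun y => \row_i f i y) x.
Proof.
move=> df.
have -> : (fun y => \row_i f i y) = \sum_i (fun y => f i y *: delta_mx 0 i).
  apply/funext => y; rewrite fct_sumE [LHS]row_sum_delta.
  by under eq_bigr do rewrite mxE.
by apply: differentiable_sum => i; apply: differentiableZl.
Qed.

Lemma diff_row : (forall i, differentiable (f i) x) ->
  forall v, 'd (fun y => \row_i f i y) x v = \row_i 'D_v (f i) x.
Proof.
move=> df v; have dr := differentiable_row df.
rewrite -deriveE // derive_mx; last exact: diff_derivable.
apply/rowP => i; rewrite !mxE; congr ('D_v _ x).
by apply/funext => y; rewrite mxE.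
Qed.

End RowValued.

Lemma derive_partialE (n : nat) (G : 'rV[R]_n -> R) (q a : 'rV[R]_n) :
  differentiable G q -> 'D_a G q = \sum_k a 0 k * partial k G q.
Proof.
move=> dG; rewrite deriveE // {1}(row_sum_delta a) linear_sum.
by apply: eq_bigr => k _; rewrite linearZ /= /partial deriveE.
Qed.

End Calculus.

Section SurjectiveMulmx.
Variables (K : fieldType) (n : nat).

Lemma surj_mulmx_unitmx (N : 'M[K]_n) :
  (forall z : 'rV_n, exists a, a *m N = z) <-> N \in unitmx.
Proof.
split=> [surjN | uN z]; last by exists (z *m invmx N); rewrite mulmxKV.
rewrite -row_full_unit -sub1mx; apply/row_subP => i.
by have [a <-] := surjN (row i 1%:M); apply: submxMl.
Qed.

Lemma bij_mulmx_unitmx (N : 'M[K]_n) :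
  bijective (fun a : 'rV_n => a *m N) <-> N \in unitmx.
Proof.
split=> [[g _ gK] | uN]; first by apply/surj_mulmx_unitmx => z; exists (g z).
by exists (fun a => a *m invmx N) => z /=; rewrite ?mulmxK ?mulmxKV.
Qed.

Lemma surj_shear_unitmx (A N : 'M[K]_n) :
  (forall y : 'rV_n * 'rV_n,
     exists v : 'rV_n * 'rV_n, (v.1 + v.2, (v.1 + v.2) *m A + v.1 *m N) = y)
  <-> N \in unitmx.
Proof.
apply: iff_trans (surj_mulmx_unitmx N); split=> [surjS z | surjN [y1 y2]].
  have [[a b] [/= /eqP]] := surjS (0, z).
  by rewrite addr_eq0 => /eqP-> ; rewrite addNr mul0mx add0r; exists (- b).
have [a aN] := surjN (y2 - y1 *m A).
by exists (a, y1 - a); rewrite /= addrC subrK aN addrC subrK.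
Qed.

End SurjectiveMulmx.

Section SmoothPsi.
Variables (R : realType) (n : nat) (F : 'rV[R]_n -> R).
Hypothesis hF : smooth F.
Local Notation rV2 := ('rV[R]_n * 'rV[R]_n)%type.

Lemma partialC (s : seq 'I_n) (i k : 'I_n) (q : 'rV[R]_n) :
  partial k (partial i (iter_partial s F)) q =
  partial i (partial k (iter_partial s F)) q.
Proof.
apply: mixed_deriveC => [z|z|z|z||]; try apply: diff_derivable.
- exact: (hF s).
- exact: (hF s).
- exact: (hF (i :: s)).
- exact: (hF (k :: s)).
- exact: differentiable_continuous (hF [:: k, i & s] q).
- exact: differentiable_continuous (hF [:: i, k & s] q).
Qed.

Definition nabla3_mx (q w : 'rV[R]_n) : 'M[R]_n :=
  \matrix_(k, i) \sum_j d3 F q i k j * w 0 j.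

Lemma nabla3E (q a w : 'rV[R]_n) : nabla3 F q a w = a *m nabla3_mx q w.
Proof.
apply/rowP => i; rewrite !mxE; apply: eq_bigr => k _.
by rewrite !mxE mulr_sumr; apply: eq_bigr => j _; rewrite mulrAC mulrC mulrA.
Qed.

Lemma bijective_nabla3 (q w : 'rV[R]_n) :
  bijective (fun zeta => nabla3 F q zeta w) <-> nabla3_mx q w \in unitmx.
Proof.
have -> : (fun zeta => nabla3 F q zeta w) = (fun a => a *m nabla3_mx q w).
  by apply/funext => a; apply: nabla3E.
exact: bij_mulmx_unitmx.
Qed.

(* The i-th coordinate of grad F q + hess F q w, written as a sum of
   products of functions so that deriveD, derive_sum and deriveM apply. *)
Definition Psi2_coord (i : 'I_n) : rV2 -> R :=
  (fun y : rV2 => partial i F y.1) +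
  \sum_j ((fun y : rV2 => partial i (partial j F) y.1) *
          (fun y : rV2 => y.2 0 j)).

Lemma PsiE : Psi F = (fun y => (y.1 + y.2, \row_i Psi2_coord i y)).
Proof.
apply/funext => y; congr pair; apply/rowP => i.
rewrite !mxE /Psi2_coord fct_sumE; congr (_ + _).
by apply: eq_bigr => j _; rewrite mxE.
Qed.

Lemma differentiable_Psi2_coord (i : 'I_n) (x : rV2) :
  differentiable (Psi2_coord i) x.
Proof.
apply: differentiableD; first exact: differentiable_comp_fst (hF [:: i] _).
apply: differentiable_sum => j; apply: differentiableM.
  exact: differentiable_comp_fst (hF [:: i; j] _).
exact: differentiable_comp_snd (differentiable_coord _ _ _).
Qed.

Lemma derive_Psi2_coord (i : 'I_n) (x v : rV2) :
  'D_v (Psi2_coord i) x =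
  (v.1 *m (hess F x.1)^T +
   (v.2 *m (hess F x.1)^T + v.1 *m nabla3_mx x.1 x.2)) 0 i.
Proof.
have dA j : derivable (fun y : rV2 => partial i (partial j F) y.1) x v.
  exact/diff_derivable/differentiable_comp_fst/(hF [:: i; j]).
have dB j : derivable (fun y : rV2 => y.2 0 j) x v.
  exact: diff_derivable (differentiable_comp_snd (differentiable_coord _ _ _)).
rewrite /Psi2_coord deriveD; first last.
- by apply: derivable_sum => j; apply: derivableM.
- exact/diff_derivable/differentiable_comp_fst/(hF [:: i]).
rewrite derive_sum; last by move=> j; apply: derivableM.
under eq_bigr => j _ do rewrite deriveM //
  (derive_comp_snd (fun M : 'rV[R]_n => M 0 j)) derive_coord
  derive_comp_fst (derive_partialE _ (hF [:: i; j] x.1)).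
rewrite derive_comp_fst (derive_partialE _ (hF [:: i] x.1)) big_split !mxE.
congr (_ + (_ + _)).
- by apply: eq_bigr => j _; rewrite !mxE (partialC [::]).
- by apply: eq_bigr => j _; rewrite !mxE mulrC.
under eq_bigr => j _ do rewrite scaler_sumr.
rewrite exchange_big; apply: eq_bigr => k _; rewrite !mxE mulr_sumr.
apply: eq_bigr => j _; rewrite (partialC [:: j]).
by rewrite [d3 _ _ _ _ _ * _]mulrC mulrCA.
Qed.

Lemma diff_Psi (x : rV2) :
  'd (Psi F) x = (fun v => (v.1 + v.2,
     (v.1 + v.2) *m (hess F x.1)^T + v.1 *m nabla3_mx x.1 x.2)) :> (_ -> _).
Proof.
have lin_add : linear (fun y : rV2 => y.1 + y.2).
  by move=> a y z /=; rewrite scalerDr addrACA.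
have dP1 := differentiable_linear lin_add add_continuous x.
have dP2 := differentiable_row (differentiable_Psi2_coord ^~ x).
rewrite PsiE (diff_pair dP1 dP2); apply/funext => v /=; congr pair.
  exact: (congr1 (fun f => f v) (diff_linear lin_add add_continuous x)).
rewrite diff_row; last by move=> i; apply: differentiable_Psi2_coord.
by apply/rowP => i; rewrite mxE derive_Psi2_coord mulmxDl -addrA.
Qed.

Lemma critical_point_Psi (x : rV2) :
  critical_point (Psi F) x <-> nabla3_mx x.1 x.2 \notin unitmx.
Proof.
rewrite /critical_point diff_Psi.
split=> [ncrit | /negP nunit surj].
  by apply/negP => /surj_shear_unitmx /ncrit.
exact/nunit/surj_shear_unitmx.
Qed.

End SmoothPsi.

Theorem mainTheorem17 (R : realType) (n : nat) (F : 'rV[R]_n -> R)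
  (hF : smooth F) :
  let Delta := [set x : 'rV[R]_n * 'rV[R]_n | critical_point (Psi F) x] in
  let S := [set x : 'rV[R]_n * 'rV[R]_n |
              ~ bijective (fun zeta : 'rV[R]_n => nabla3 F x.1 zeta x.2)] in
  Delta = S /\ (Psi F) @` Delta = (Psi F) @` S.
Proof.
move=> Delta S.
have DeltaS : Delta = S.
  apply/seteqP; split=> x /=.
    by move=> /(critical_point_Psi hF) /negP nunit /bijective_nabla3.
  by move=> nbij; apply/(critical_point_Psi hF)/negP => /bijective_nabla3.
by rewrite DeltaS.
Qed.
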